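(* Let $E_1,H_1,\dots,E_n,H_n$ be logically independent events, $\mathcal F_k=\{E_1|H_1,\dots,E_k|H_k\}$, and $(p_1,\dots,p_n)\in[0,1]^n$ an assessment on $\mathcal F_n$. For each $k=2,\dots,n$, the set of coherent extensions of $(p_1,\dots,p_k)$ to the quasi disjunction $\mathcal D(\mathcal F_k)=\big(\bigvee_{i=1}^kE_iH_i\big)\,|\,\big(\bigvee_{i=1}^kH_i\big)$ is the interval $[l_k,u_k]$ with $l_k=T_0^H(p_1,\dots,p_k)$ and $u_k=S_L(p_1,\dots,p_k)=\min(p_1+\dots+p_k,1)$. *)

From HB Require Import structures.
From mathcomp Require Import all_boot all_order all_algebra.
Set Implicit Arguments. Unset Strict Implicit. Unset Printing Implicit Defensive.
Import Order.TTheory GRing.Theory Num.Theory.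
Local Open Scope ring_scope.

(* Events are boolean predicates on a sample space T.  A conditional event
   E|H is represented by the pair of events (E, H). *)

(* Logical independence of E_1,H_1,...,E_n,H_n: every one of the 2^(2n)
   constituents (truth-value assignments) is possible. *)
Definition logically_independent (T : Type) (n : nat) (E H : 'I_n -> pred T) :=
  forall f : 'I_n -> bool * bool,
    exists w : T, forall i, E i w = (f i).1 /\ H i w = (f i).2.

(* Coherence (de Finetti / Gilio betting scheme) of an assessment p on the
   family {E_i | H_i : i in I}: for every sub-family J (nonempty) and every
   real stakes s, the random gain G_J = sum_{i in J} s_i H_i (E_i - p_i),
   restricted to the constituents contained in H_J = \/_{i in J} H_i,
   satisfies  min G_J <= 0 <= max G_J. *)
Definition gain (R : numDomainType) (T : Type) (I : finType)
  (E H : I -> pred T) (p : I -> R) (J : {set I}) (s : I -> R) (w : T) : R :=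
  \sum_(i in J) s i * (H i w)%:R * ((E i w)%:R - p i).

Definition coherent (R : numDomainType) (T : Type) (I : finType)
  (E H : I -> pred T) (p : I -> R) : Prop :=
  forall (J : {set I}) (s : I -> R), J != set0 ->
    (exists2 w : T, [exists i in J, H i w] & 0 <= gain E H p J s w) /\
    (exists2 w : T, [exists i in J, H i w] & gain E H p J s w <= 0).

(* The family F_k together with the quasi disjunction
   D(F_k) = (\/_{i<=k} E_i H_i) | (\/_{i<=k} H_i), indexed by option 'I_k
   (None = the quasi disjunction). *)
Definition qdE (T : Type) (n k : nat) (hk : (k <= n)%N) (E H : 'I_n -> pred T)
  : option 'I_k -> pred T :=
  fun o => match o with
  | Some i => E (widen_ord hk i)
  | None => fun w => [exists i : 'I_k, E (widen_ord hk i) w && H (widen_ord hk i) w]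
  end.

Definition qdH (T : Type) (n k : nat) (hk : (k <= n)%N) (H : 'I_n -> pred T)
  : option 'I_k -> pred T :=
  fun o => match o with
  | Some i => H (widen_ord hk i)
  | None => fun w => [exists i : 'I_k, H (widen_ord hk i) w]
  end.

Definition qdp (R : Type) (n k : nat) (hk : (k <= n)%N) (p : 'I_n -> R) (z : R)
  : option 'I_k -> R :=
  fun o => match o with Some i => p (widen_ord hk i) | None => z end.

Definition hamacher (R : fieldType) (x y : R) : R :=
  if (x == 0) && (y == 0) then 0 else x * y / (x + y - x * y).

Definition hamacherL (R : fieldType) (s : seq R) : R :=
  match s with [::] => 1 | x :: s' => foldl (@hamacher R) x s' end.

Definition lukasiewiczS (R : realDomainType) (s : seq R) : R :=
  Num.min (\sum_(x <- s) x) 1.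

From HB Require Import structures.
From mathcomp Require Import all_boot all_order all_algebra.
From mathcomp Require Import ring lra.
Import Order.TTheory GRing.Theory Num.Theory.
Set Implicit Arguments. Unset Strict Implicit. Unset Printing Implicit Defensive.
Local Open Scope ring_scope.

(* First, coherence only looks at the gains at sample points, which depend
   only on the constituent of the point: the pair ({i | E_i}, {i | H_i}).
   Logical independence makes every constituent possible, so coherence
   transfers to the same family over the finite space of constituents
   (coherent_pullback, constituent_of_surj).

   Sufficiency: an assessment is coherent on a subfamily J as soon as some
   finitely supported distribution on H_J makes every bet of J fair; then
   every combined bet has expectation zero and must take both signs on H_J
   (balanced_bets).  For the family F_k + D we exhibit such distributions on
   H_D when z is the lower or the upper bound (by cases on the p_i), mix them
   for every z in between (qd_feasible_mix), and use a two-point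
   distribution on the subfamilies not containing D.

   Necessity: coherence on {D} gives 0 <= z <= 1; below the lower bound
   (resp. above the sum) explicit stakes give a strictly positive (resp.
   negative) gain on every constituent of H_D.  For positive p_i the Hamacher
   product is computed in closed form, T_0^H = (1 + sum_i (1/p_i - 1))^-1. *)

Section Pullback.
Variables (R : numDomainType) (T T' : Type) (I : finType).
Variables (E H : I -> pred T) (E' H' : I -> pred T') (p : I -> R).
Variable phi : T -> T'.
Hypothesis phi_surj : forall y, exists w, phi w = y.
Hypothesis phiE : forall i w, E i w = E' i (phi w).
Hypothesis phiH : forall i w, H i w = H' i (phi w).

Lemma coherent_pullback : coherent E H p <-> coherent E' H' p.
Proof.
have gainE J s w : gain E H p J s w = gain E' H' p J s (phi w).
  by apply: eq_bigr => i _; rewrite phiE phiH.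
have condE J w : [exists i in J, H i w] = [exists i in J, H' i (phi w)].
  by apply: eq_existsb => i; rewrite phiH.
split=> coh J s J0; have [[w1 c1 g1] [w2 c2 g2]] := coh J s J0.
  by split; [exists (phi w1) | exists (phi w2)]; rewrite -?condE -?gainE.
have [v1 e1] := phi_surj w1; have [v2 e2] := phi_surj w2.
by split; [exists v1 | exists v2]; rewrite ?condE ?gainE ?e1 ?e2.
Qed.

End Pullback.

Lemma coherent_unit_interval (R : realFieldType) (T : Type) (I : finType)
    (E H : I -> pred T) (p : I -> R) :
  coherent E H p -> forall i, 0 <= p i <= 1.
Proof.
move=> coh i.
have i0 : [set i] != set0 by apply/set0Pn; exists i; rewrite set11.
have [[w1 c1 g1] [w2 c2 g2]] := coh [set i] (fun _ => 1) i0.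
have cond w : [exists j in [set i], H j w] -> H i w.
  by case/existsP=> j /andP[/set1P -> ->].
move: g1 g2; rewrite /gain !big_set1 !mul1r (cond _ c1) (cond _ c2) !mul1r.
by case: (E i w1); case: (E i w2) => /=; lra.
Qed.

(* Finitely supported distributions are lists ws of (weight, point); mean ws g
   is the (unnormalized) expectation of g and mass ws the total weight. *)
Definition mean (R : pzRingType) (S : Type) (ws : seq (R * S)) (g : S -> R) : R :=
  \sum_(x <- ws) x.1 * g x.2.

Definition mass (R : pzRingType) (S : Type) (ws : seq (R * S)) : R :=
  mean ws (fun _ => 1).

Definition scale (R : pzRingType) (S : Type) (c : R) (ws : seq (R * S))
    : seq (R * S) :=
  [seq (c * x.1, x.2) | x <- ws].

Section Means.
Variables (R : comPzRingType) (S : Type).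
Implicit Types (ws : seq (R * S)) (g : S -> R).

Lemma mean_nil g : mean [::] g = 0.
Proof. by rewrite /mean big_nil. Qed.

Lemma mean_cons a w ws g : mean ((a, w) :: ws) g = a * g w + mean ws g.
Proof. by rewrite /mean big_cons. Qed.

Lemma mean_cat ws1 ws2 g : mean (ws1 ++ ws2) g = mean ws1 g + mean ws2 g.
Proof. by rewrite /mean big_cat. Qed.

Lemma mean_scale c ws g : mean (scale c ws) g = c * mean ws g.
Proof. by rewrite /mean big_map mulr_sumr; apply: eq_bigr => x _; rewrite mulrA. Qed.

Lemma mean_family (J : finType) (a : J -> R) (w : J -> S) g :
  mean [seq (a j, w j) | j <- enum J] g = \sum_j a j * g (w j).
Proof. by rewrite /mean big_map big_enum. Qed.

Lemma mass_cons a w ws : mass ((a, w) :: ws) = a + mass ws.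
Proof. by rewrite /mass mean_cons mulr1. Qed.

Lemma mass_family (J : finType) (a : J -> R) (w : J -> S) :
  mass [seq (a j, w j) | j <- enum J] = \sum_j a j.
Proof. by rewrite /mass mean_family; under eq_bigr do rewrite mulr1. Qed.

Lemma mean_sub_const ws g a : mean ws (fun w => g w - a) = mean ws g - a * mass ws.
Proof. by rewrite /mass /mean mulr_sumr -sumrB; apply: eq_bigr => x _; ring. Qed.

End Means.

Lemma eq_mean_supp (R : pzRingType) (S : eqType) (P : pred S) (ws : seq (R * S))
    (g1 g2 : S -> R) :
  all (fun x => P x.2) ws -> (forall w, P w -> g1 w = g2 w) ->
  mean ws g1 = mean ws g2.
Proof. by move=> /allP supp eq_g; apply: eq_big_seq => x /supp /eq_g ->. Qed.

Lemma mean_zero_witness (R : realFieldType) (S : eqType) (ws : seq (R * S))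
    (g : S -> R) :
  all (fun x => 0 <= x.1) ws -> 0 < mass ws -> mean ws g = 0 ->
  exists2 x, x \in ws & 0 <= g x.2.
Proof.
move=> /allP ws_ge0 mass_gt0 mean0.
have [/hasP[x xws gx]|/hasPn g_lt0] := boolP (has (fun x => 0 <= g x.2) ws).
  by exists x.
have terms0 : all (fun x => (x \in ws) ==> (- (x.1 * g x.2) == 0)) ws.
  rewrite -psumr_eq0 => [|x xws]; last first.
    by rewrite oppr_ge0 mulr_ge0_le0 ?ws_ge0 // ltW // ltNge g_lt0.
  by rewrite -big_seq sumrN oppr_eq0 -/(mean ws g) mean0.
suff : mass ws = 0 by move=> m0; rewrite m0 ltxx in mass_gt0.
rewrite /mass /mean big_seq big1 // => x xws.
move/allP: terms0 => /(_ x xws); rewrite xws oppr_eq0 mulf_eq0 mulr1 /=.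
by case/orP=> [/eqP //|/eqP gx]; move: (g_lt0 x xws); rewrite gx lexx.
Qed.

Definition unit_gain (R : pzRingType) (T : Type) (I : Type) (E H : I -> pred T)
  (p : I -> R) (i : I) (w : T) : R := (H i w)%:R * ((E i w)%:R - p i).

Lemma gain_option (R : numDomainType) (T : Type) (I : finType)
    (E H : option I -> pred T) (p : option I -> R) (s : option I -> R) (w : T) :
  gain E H p setT s w =
  s None * unit_gain E H p None w + \sum_i s (Some i) * unit_gain E H p (Some i) w.
Proof.
rewrite /gain /unit_gain (eq_bigl predT) => [|o]; last by rewrite inE.
rewrite (bigD1 None) //= !mulrA; congr (_ + _).
rewrite (reindex_omap Some id) //=; last by case.
by apply: eq_big => [i|i _]; rewrite ?eqxx ?mulrA.
Qed.

Section Balance.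
Variables (R : realFieldType) (S : eqType) (I : finType).
Variables (E H : I -> pred S) (p : I -> R).
Local Notation unit_gain := (unit_gain E H p).

Definition balanced (J : {set I}) (ws : seq (R * S)) : Prop :=
  [/\ all (fun x => 0 <= x.1) ws, 0 < mass ws,
      all (fun x => [exists i in J, H i x.2]) ws &
      forall i, i \in J -> mean ws (unit_gain i) = 0].

(* A balanced distribution witnesses the coherence condition on J: every
   combined bet on J has zero mean, so it takes both signs on H_J. *)
Lemma balanced_bets (J : {set I}) (ws : seq (R * S)) (s : I -> R) :
  balanced J ws ->
  (exists2 w, [exists i in J, H i w] & 0 <= gain E H p J s w) /\
  (exists2 w, [exists i in J, H i w] & gain E H p J s w <= 0).
Proof.
case=> ws_ge0 mass_gt0 /allP supp bal.
have mean_gain0 (t : R) : mean ws (fun w => t * gain E H p J s w) = 0.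
  rewrite /mean; under eq_bigr do rewrite /gain !mulr_sumr.
  rewrite exchange_big big1 // => i iJ.
  transitivity (t * s i * mean ws (unit_gain i)); last by rewrite bal ?mulr0.
  by rewrite /mean mulr_sumr; apply: eq_bigr => x _; rewrite /unit_gain; ring.
have [x1 x1ws g1] := mean_zero_witness ws_ge0 mass_gt0 (mean_gain0 1).
have [x2 x2ws g2] := mean_zero_witness ws_ge0 mass_gt0 (mean_gain0 (-1)).
split; [exists x1.2 | exists x2.2]; rewrite ?supp //.
  by rewrite mul1r in g1.
by rewrite mulN1r oppr_ge0 in g2.
Qed.

Lemma coherent_of_balanced :
  (forall J : {set I}, J != set0 -> exists ws, balanced J ws) -> coherent E H p.
Proof. by move=> bal J s /bal[ws /balanced_bets]; apply. Qed.

End Balance.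

Section Hamacher.
Variable R : realFieldType.
Implicit Types (x y : R) (s : seq R).

Lemma hamacher_eq0 x y : (x == 0) || (y == 0) -> hamacher x y = 0.
Proof.
by rewrite /hamacher; case: ifP => // _ /orP[] /eqP ->; rewrite ?(mul0r, mulr0).
Qed.

Lemma foldl_hamacher_eq0 x s : 0 \in x :: s -> foldl (@hamacher R) x s = 0.
Proof.
elim: s x => [|y s IH] x; first by rewrite mem_seq1 => /eqP <-.
rewrite /= !inE => /or3P[x0|y0|s0]; apply: IH; rewrite inE ?s0 ?orbT //.
  by rewrite hamacher_eq0 ?eqxx // eq_sym x0.
by rewrite hamacher_eq0 ?eqxx // [y == 0]eq_sym y0 orbT.
Qed.

Lemma hamacherL_eq0 s : 0 \in s -> hamacherL s = 0.
Proof. by case: s => // x s; apply: foldl_hamacher_eq0. Qed.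

Lemma hamacher_recip x y : 0 < x <= 1 -> 0 < y <= 1 ->
  hamacher x y = (x^-1 + (y^-1 - 1))^-1.
Proof.
case/andP=> x_gt0 x_le1 /andP[y_gt0 y_le1].
have den_gt0 : 0 < x + y - x * y by nra.
rewrite /hamacher (gt_eqF x_gt0) /=; field.
by rewrite !gt_eqF //; nra.
Qed.

Lemma foldl_hamacher_recip x s : 0 < x <= 1 -> all (fun y => 0 < y <= 1) s ->
  foldl (@hamacher R) x s = (x^-1 + \sum_(y <- s) (y^-1 - 1))^-1.
Proof.
elim: s x => [|y s IH] x x01 /=; first by rewrite big_nil addr0 invrK.
case/andP=> y01 s01; rewrite hamacher_recip // IH ?invrK ?big_cons ?addrA //.
have /andP[x_gt0 x_le1] := x01; have /andP[y_gt0 y_le1] := y01.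
have : 1 <= x^-1 by rewrite invf_ge1.
have : 1 <= y^-1 by rewrite invf_ge1.
move=> yi xi; rewrite invr_gt0 invf_le1; lra.
Qed.

Lemma hamacherL_recip s : s != [::] -> all (fun y => 0 < y <= 1) s ->
  hamacherL s = (1 + \sum_(y <- s) (y^-1 - 1))^-1.
Proof.
case: s => // x s _ /= /andP[x01 s01].
by rewrite foldl_hamacher_recip // big_cons; congr (_^-1); ring.
Qed.

End Hamacher.

Section QuasiDisjunction.
Variables (R : realFieldType) (k : nat).

(* A constituent (A, B) records which E_i (i in A) and which H_i (i in B)
   are true. *)
Definition constituent := ({set 'I_k} * {set 'I_k})%type.

Definition qdCE (o : option 'I_k) : pred constituent := fun c =>
  if o is Some i then i \in c.1 else [exists i, (i \in c.1) && (i \in c.2)].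

Definition qdCH (o : option 'I_k) : pred constituent := fun c =>
  if o is Some i then i \in c.2 else [exists i, i \in c.2].

Definition qdA (q : 'I_k -> R) (z : R) : option 'I_k -> R := fun o =>
  if o is Some i then q i else z.

Definition single (j : 'I_k) (b : bool) : constituent :=
  (if b then [set j] else set0, [set j]).

Definition full (A : {set 'I_k}) : constituent := (A, setT).

Lemma qdCH_single j b : qdCH None (single j b).
Proof. by apply/existsP; exists j; rewrite set11. Qed.

Lemma qdCE_single j b : qdCE None (single j b) = b.
Proof.
apply/existsP; case: b => [|[i]] /=; first by exists j; rewrite set11.
by rewrite inE.
Qed.

Lemma qdCH_full A : (0 < k)%N -> qdCH None (full A).
Proof. by move=> k_gt0; apply/existsP; exists (Ordinal k_gt0); rewrite inE. Qed.

Lemma qdCE_full A : qdCE None (full A) = (A != set0).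
Proof.
apply/existsP/set0Pn => [[i /andP[iA _]]|[i iA]]; exists i => //.
by rewrite iA inE.
Qed.

Lemma qdCE_full1 j : qdCE None (full [set j]).
Proof. by rewrite qdCE_full; apply/set0Pn; exists j; rewrite set11. Qed.

Lemma qdCE_fullT : (0 < k)%N -> qdCE None (full setT).
Proof. by move=> k_gt0; rewrite qdCE_full; apply/set0Pn; exists (Ordinal k_gt0). Qed.

Variable q : 'I_k -> R.

Definition bet_gain (i : 'I_k) (c : constituent) : R :=
  (i \in c.2)%:R * ((i \in c.1)%:R - q i).

Lemma bet_gain_single i j b :
  bet_gain i (single j b) = if i == j then b%:R - q i else 0.
Proof.
by rewrite /bet_gain /=; case: (i =P j) => [->|/eqP ij]; case: b;
  rewrite ?set11 ?in_set1 ?inE ?(negbTE ij) ?mul1r ?mul0r.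
Qed.

Lemma bet_gain_full i A : bet_gain i (full A) = (i \in A)%:R - q i.
Proof. by rewrite /bet_gain inE mul1r. Qed.

Lemma sum_bet_single (a : 'I_k -> R) i b :
  \sum_j a j * bet_gain i (single j b) = a i * (b%:R - q i).
Proof.
under eq_bigr do rewrite bet_gain_single.
rewrite (bigD1 i) //= eqxx big1 ?addr0 // => j ji.
by rewrite eq_sym (negbTE ji) mulr0.
Qed.

Lemma sum_bet_full1 (a : 'I_k -> R) i :
  \sum_j a j * bet_gain i (full [set j]) = a i - (\sum_j a j) * q i.
Proof.
under eq_bigr do rewrite bet_gain_full in_set1 mulrBr.
rewrite sumrB -mulr_suml (bigD1 i) //= eqxx mulr1 big1 ?addr0 // => j ji.
by rewrite eq_sym (negbTE ji) mulr0.
Qed.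

Lemma qd_unit_gain_Some z i : unit_gain qdCE qdCH (qdA q z) (Some i) = bet_gain i.
Proof. by []. Qed.

Lemma qd_unit_gain_None z c :
  qdCH None c -> unit_gain qdCE qdCH (qdA q z) None c = (qdCE None c)%:R - z.
Proof. by rewrite /unit_gain /= => ->; rewrite mul1r. Qed.

(* z is feasible when some distribution on the constituents of H_D gives
   every E_i|H_i the conditional probability q_i and D the probability z. *)
Definition qd_feasible (z : R) : Prop :=
  exists ws : seq (R * constituent),
    [/\ all (fun x => 0 <= x.1) ws, 0 < mass ws, all (fun x => qdCH None x.2) ws,
        forall i, mean ws (bet_gain i) = 0 &
        mean ws (fun c => (qdCE None c)%:R) = z * mass ws].

Lemma qd_feasible_balanced z (J : {set option 'I_k}) :
  None \in J -> qd_feasible z -> exists ws, balanced qdCE qdCH (qdA q z) J ws.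
Proof.
move=> DJ [ws [ws_ge0 mass_gt0 suppD bal balD]]; exists ws; split => //.
  by apply: sub_all suppD => x Dx; apply/existsP; exists None; rewrite DJ.
case=> [i _|_]; first exact: bal.
rewrite (eq_mean_supp suppD (qd_unit_gain_None z)) mean_sub_const balD.
exact: subrr.
Qed.

Lemma qd_balanced_single z (J : {set option 'I_k}) j :
  0 <= q j <= 1 -> None \notin J -> Some j \in J ->
  balanced qdCE qdCH (qdA q z) J [:: (q j, single j true); (1 - q j, single j false)].
Proof.
move=> /andP[qj_ge0 qj_le1] DJ jJ; split.
- by rewrite /= qj_ge0 subr_ge0 qj_le1.
- by rewrite /mass !mean_cons mean_nil; lra.
- by rewrite /= andbT; apply/andP; split; apply/existsP; exists (Some j);
    rewrite jJ /= set11.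
case=> [i _|]; last by rewrite (negbTE DJ).
rewrite qd_unit_gain_Some !mean_cons mean_nil !bet_gain_single.
by case: eqP => [->|_] /=; ring.
Qed.

Lemma qd_coherent_of_feasible z :
  (forall i, 0 <= q i <= 1) -> qd_feasible z -> coherent qdCE qdCH (qdA q z).
Proof.
move=> q01 feas; apply: coherent_of_balanced => J J0.
have [DJ|DJ] := boolP (None \in J); first exact: qd_feasible_balanced.
case/set0Pn: J0 => -[j|] oJ; last by rewrite oJ in DJ.
by exists [:: (q j, single j true); (1 - q j, single j false)]; apply: qd_balanced_single.
Qed.

Lemma qd_feasible_mix l u z :
  l <= z <= u -> qd_feasible l -> qd_feasible u -> qd_feasible z.
Proof.
case/andP=> lz zu fl fu; have [el|nlu] := eqVneq l u.
  by have -> : z = l by apply/eqP; rewrite eq_le lz el zu.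
have lu : l < u by rewrite lt_neqAle nlu (le_trans lz zu).
case: fl fu => [ws1 [ge1 m1 supp1 bal1 D1]] [ws2 [ge2 m2 supp2 bal2 D2]].
set c1 := (u - z) / mass ws1; set c2 := (z - l) / mass ws2.
have c1_ge0 : 0 <= c1 by apply: divr_ge0; lra.
have c2_ge0 : 0 <= c2 by apply: divr_ge0; lra.
have e1 : c1 * mass ws1 = u - z by rewrite divfK ?gt_eqF.
have e2 : c2 * mass ws2 = z - l by rewrite divfK ?gt_eqF.
have mass_mix : mass (scale c1 ws1 ++ scale c2 ws2) = u - l.
  by rewrite /mass mean_cat !mean_scale -!/(mass _) e1 e2; ring.
exists (scale c1 ws1 ++ scale c2 ws2); split.
- rewrite all_cat !all_map; apply/andP; split.
    by apply: sub_all ge1 => x /= ?; rewrite mulr_ge0.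
  by apply: sub_all ge2 => x /= ?; rewrite mulr_ge0.
- by rewrite mass_mix subr_gt0.
- by rewrite all_cat !all_map supp1 supp2.
- by move=> i; rewrite mean_cat !mean_scale bal1 bal2 !mulr0 addr0.
by rewrite mean_cat !mean_scale D1 D2 mulrCA e1 mulrCA e2 mass_mix; ring.
Qed.

Lemma qd_feasible_extreme j (b : bool) : q j = b%:R -> qd_feasible b%:R.
Proof.
move=> qj; exists [:: (1, single j b)]; split.
- by rewrite /= ler01.
- by rewrite /mass mean_cons mean_nil mulr1 addr0 ltr01.
- by rewrite /all qdCH_single.
- move=> i; rewrite mean_cons mean_nil bet_gain_single.
  by case: eqP => [->|_]; rewrite ?qj ?subrr mulr0 addr0.
by rewrite /mass !mean_cons !mean_nil qdCE_single !(mulr1, mul1r, addr0).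
Qed.

Lemma qd_feasible_hamacher : (0 < k)%N -> (forall i, 0 < q i <= 1) ->
  qd_feasible (1 + \sum_i ((q i)^-1 - 1))^-1.
Proof.
move=> k_gt0 q01; set b := \sum_i ((q i)^-1 - 1).
have odds_ge0 i : 0 <= (q i)^-1 - 1.
  by have /andP[qi_gt0 qi_le1] := q01 i; rewrite subr_ge0 invf_ge1.
have b_ge0 : 0 <= b by apply: sumr_ge0.
set ws := (1, full setT) :: [seq ((q j)^-1 - 1, single j false) | j <- enum 'I_k].
have mass_ws : mass ws = 1 + b by rewrite mass_cons mass_family.
exists ws; split.
- by rewrite /ws /= ler01 all_map; apply/allP => j _ /=.
- by rewrite mass_ws; lra.
- rewrite /ws /all -/(all _ _) all_map qdCH_full //.
  by apply/allP => j _; exact: qdCH_single.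
- move=> i; rewrite mean_cons mean_family sum_bet_single bet_gain_full inE.
  have /andP[qi_gt0 _] := q01 i; rewrite /=; field.
  by rewrite gt_eqF.
rewrite mass_ws mulVf; last by rewrite gt_eqF //; lra.
rewrite mean_cons mean_family qdCE_fullT // mulr1 big1 ?addr0 // => j _.
by rewrite qdCE_single mulr0.
Qed.

Lemma qd_feasible_sum : (0 < k)%N -> (forall i, 0 <= q i) ->
  \sum_i q i <= 1 -> qd_feasible (\sum_i q i).
Proof.
move=> k_gt0 q_ge0 sum_le1; set S := \sum_i q i in sum_le1 *.
set ws := (1 - S, full set0) :: [seq (q j, full [set j]) | j <- enum 'I_k].
have mass_ws : mass ws = 1 by rewrite mass_cons mass_family subrK.
exists ws; split.
- by rewrite /ws /= subr_ge0 sum_le1 all_map; apply/allP => j _ /=.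
- by rewrite mass_ws ltr01.
- rewrite /ws /all -/(all _ _) all_map qdCH_full //.
  by apply/allP => j _; apply: qdCH_full.
- by move=> i; rewrite mean_cons mean_family sum_bet_full1 bet_gain_full inE /= -/S; ring.
rewrite mass_ws mulr1 mean_cons mean_family qdCE_full eqxx mulr0 add0r.
by apply: eq_bigr => j _; rewrite qdCE_full1 mulr1.
Qed.

(* Sum at least 1 and all q_i < 1: weights q_j / S on full [set j], and
   single j true compensates the missing conditional mass of E_j|H_j. *)
Lemma qd_feasible_one : (0 < k)%N -> (forall i, 0 <= q i < 1) ->
  1 <= \sum_i q i -> qd_feasible 1.
Proof.
move=> k_gt0 q01 sum_ge1; set S := \sum_i q i in sum_ge1 *.
have S_neq0 : S != 0 by rewrite gt_eqF //; lra.
pose y j := (q j - q j / S) / (1 - q j).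
have y_ge0 j : 0 <= y j.
  have /andP[qj_ge0 qj_lt1] := q01 j.
  have : q j / S <= q j by rewrite ler_pdivrMr; nra.
  by move=> ?; apply: divr_ge0; lra.
set ws := [seq (q j / S, full [set j]) | j <- enum 'I_k] ++
          [seq (y j, single j true) | j <- enum 'I_k].
have qS1 : \sum_j q j / S = 1 by rewrite -mulr_suml divff.
have mass_ws : mass ws = 1 + \sum_j y j.
  by rewrite /mass mean_cat -!/(mass _) !mass_family qS1.
have suppD : all (fun x => qdCH None x.2) ws.
  by rewrite all_cat !all_map; apply/andP; split; apply/allP => j _;
    [apply: qdCH_full | apply: qdCH_single].
exists ws; split => //.
- by rewrite all_cat !all_map; apply/andP; split; apply/allP => j _ //=;
    have /andP[? ?] := q01 j; rewrite divr_ge0 //; lra.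
- have : 0 <= \sum_j y j by apply: sumr_ge0.
  by rewrite mass_ws; lra.
- move=> i; rewrite mean_cat !mean_family sum_bet_full1 sum_bet_single qS1 /y.
  have /andP[_ qi_lt1] := q01 i; rewrite /=; field.
  by rewrite S_neq0 subr_eq0 eq_sym lt_eqF.
have suppE : all (fun x => qdCE None x.2) ws.
  by rewrite all_cat !all_map; apply/andP; split; apply/allP => j _;
    [exact: qdCE_full1 | exact: qdCE_single].
by rewrite mul1r /mass; apply: eq_mean_supp suppE _ => c ->.
Qed.

Lemma sum_enum_ord (F : R -> R) :
  \sum_(x <- [seq q i | i <- enum 'I_k]) F x = \sum_i F (q i).
Proof. by rewrite big_map big_enum. Qed.

Lemma hamacherL_cases : (0 < k)%N -> (forall i, 0 <= q i <= 1) ->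
  ((exists j, q j = 0) /\ hamacherL [seq q i | i <- enum 'I_k] = 0) \/
  ((forall i, 0 < q i <= 1) /\
   hamacherL [seq q i | i <- enum 'I_k] = (1 + \sum_i ((q i)^-1 - 1))^-1).
Proof.
move=> k_gt0 q01.
have [/existsP[j /eqP qj0]|/existsPn q_neq0] := boolP [exists j, q j == 0].
  left; split; first by exists j.
  by apply: hamacherL_eq0; apply/mapP; exists j; rewrite ?mem_enum ?qj0.
have q_pos i : 0 < q i <= 1.
  by have /andP[qi_ge0 qi_le1] := q01 i; rewrite qi_le1 andbT lt_def q_neq0.
right; split => //; rewrite hamacherL_recip ?(sum_enum_ord (fun y => y^-1 - 1)) //.
  by rewrite -size_eq0 size_map size_enum_ord -lt0n.
by rewrite all_map; apply/allP => i _; apply: q_pos.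
Qed.

Lemma lukasiewiczS_ord :
  lukasiewiczS [seq q i | i <- enum 'I_k] = Num.min (\sum_i q i) 1.
Proof. by rewrite /lukasiewiczS (sum_enum_ord (fun x => x)). Qed.

Lemma qd_feasible_lower : (0 < k)%N -> (forall i, 0 <= q i <= 1) ->
  qd_feasible (hamacherL [seq q i | i <- enum 'I_k]).
Proof.
move=> k_gt0 q01; case: (hamacherL_cases k_gt0 q01) => [[[j qj0] ->]|[q_pos ->]].
  by have := @qd_feasible_extreme j false; rewrite mulr0n; apply.
exact: qd_feasible_hamacher.
Qed.

Lemma qd_feasible_upper : (0 < k)%N -> (forall i, 0 <= q i <= 1) ->
  qd_feasible (lukasiewiczS [seq q i | i <- enum 'I_k]).
Proof.
move=> k_gt0 q01; rewrite lukasiewiczS_ord.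
have q_ge0 i : 0 <= q i by have /andP[] := q01 i.
rewrite minEle; case: leP => [S_le1|S_gt1]; first exact: qd_feasible_sum.
have [/existsP[j /eqP qj1]|/existsPn q_neq1] := boolP [exists j, q j == 1].
  by have := @qd_feasible_extreme j true; rewrite mulr1n; apply.
apply: qd_feasible_one => // [i|]; last exact: ltW.
by have /andP[qi_ge0 qi_le1] := q01 i; rewrite qi_ge0 lt_neqAle q_neq1.
Qed.

Lemma qdCH_D (J : {set option 'I_k}) c : [exists o in J, qdCH o c] -> qdCH None c.
Proof. by case/existsP=> -[i|] /andP[_ Hc] //; apply/existsP; exists i. Qed.

Lemma setT_option_neq0 : [set: option 'I_k] != set0.
Proof. by apply/set0Pn; exists None; rewrite inE. Qed.

(* Stakes refuting z < l, resp. z > sum_i q_i. *)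
Definition lower_stakes (l : R) (o : option 'I_k) : R :=
  if o is Some i then - (l / q i) else 1.

Definition upper_stakes (o : option 'I_k) : R := if o is Some _ then -1 else 1.

Lemma lower_stake_gain l i c : q i != 0 ->
  lower_stakes l (Some i) * bet_gain i c =
  if i \in c.2 then (if i \in c.1 then - (l * ((q i)^-1 - 1)) else l) else 0.
Proof.
by move=> qi_neq0; rewrite /bet_gain; case: (i \in c.2); case: (i \in c.1) => /=;
  rewrite ?mul0r ?mulr0 //; field.
Qed.

Lemma qd_lower_gain z l c : (forall i, 0 < q i <= 1) ->
  0 <= l -> l * (1 + \sum_i ((q i)^-1 - 1)) = 1 -> qdCH None c ->
  l - z <= gain qdCE qdCH (qdA q z) setT (lower_stakes l) c.
Proof.
move=> q01 l_ge0 l_inv cD.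
have q_neq0 i : q i != 0 by have /andP[qi_gt0 _] := q01 i; rewrite gt_eqF.
have odds_ge0 i : 0 <= l * ((q i)^-1 - 1).
  by have /andP[? ?] := q01 i; rewrite mulr_ge0 // subr_ge0 invf_ge1.
pose t i := if i \in c.2 then (if i \in c.1 then - (l * ((q i)^-1 - 1)) else l) else 0.
rewrite gain_option qd_unit_gain_None // mul1r (eq_bigr t) => [|i _]; last first.
  by rewrite qd_unit_gain_Some lower_stake_gain.
have [ED|nED] := boolP (qdCE None c).
  have : - (l * \sum_i ((q i)^-1 - 1)) <= \sum_i t i.
    rewrite mulr_sumr -sumrN; apply: ler_sum => i _; rewrite /t.
    by case: (i \in c.2); case: (i \in c.1); rewrite ?lexx ?oppr_le0 //
      (le_trans _ l_ge0) ?oppr_le0.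
  by rewrite mulrDr mulr1 in l_inv; rewrite /=; lra.
have [j Hj] := existsP cD.
have nE i : i \in c.2 -> i \notin c.1.
  by move=> Hi; apply: contra nED => Ei; apply/existsP; exists i; rewrite Ei.
rewrite (bigD1 j) //= {1}/t Hj (negbTE (nE j Hj)).
have : 0 <= \sum_(i | i != j) t i.
  by apply: sumr_ge0 => i _; rewrite /t; case: ifP => // /nE /negbTE ->.
lra.
Qed.

Lemma qd_upper_gain z c : (forall i, 0 <= q i) -> qdCH None c ->
  gain qdCE qdCH (qdA q z) setT upper_stakes c <= \sum_i q i - z.
Proof.
move=> q_ge0 cD; rewrite gain_option qd_unit_gain_None // mul1r.
under eq_bigr do rewrite qd_unit_gain_Some.
pose EH i := ((i \in c.1) && (i \in c.2))%:R : R.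
have ED_le : (qdCE None c)%:R <= \sum_i EH i.
  have EH_ge0 i : 0 <= EH i by rewrite ler0n.
  case/boolP: (qdCE None c) => [/existsP[j EHj]|_]; last exact: sumr_ge0.
  by rewrite (bigD1 j) //= /EH EHj lerDl sumr_ge0.
have : \sum_i upper_stakes (Some i) * bet_gain i c <= \sum_i (q i - EH i).
  apply: ler_sum => i _; rewrite /bet_gain /EH.
  by have := q_ge0 i; case: (i \in c.2); case: (i \in c.1) => /=; lra.
rewrite sumrB; lra.
Qed.

Lemma qd_coherent_lower z : (0 < k)%N -> (forall i, 0 <= q i <= 1) ->
  coherent qdCE qdCH (qdA q z) -> hamacherL [seq q i | i <- enum 'I_k] <= z.
Proof.
move=> k_gt0 q01 coh; case: (hamacherL_cases k_gt0 q01) => [[_ ->]|[q_pos ->]].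
  by have /andP[] := coherent_unit_interval coh None.
set l := (1 + _)^-1.
have b_ge0 : 0 <= \sum_i ((q i)^-1 - 1).
  by apply: sumr_ge0 => i _; have /andP[? ?] := q_pos i; rewrite subr_ge0 invf_ge1.
have l_gt0 : 0 < l by rewrite invr_gt0; lra.
have l_inv : l * (1 + \sum_i ((q i)^-1 - 1)) = 1 by rewrite mulVf ?gt_eqF //; lra.
rewrite leNgt; apply/negP => z_lt_l.
have [_ [c cD gain_le0]] := coh setT (lower_stakes l) setT_option_neq0.
have := qd_lower_gain z q_pos (ltW l_gt0) l_inv (qdCH_D cD); lra.
Qed.

Lemma qd_coherent_upper z : (forall i, 0 <= q i <= 1) ->
  coherent qdCE qdCH (qdA q z) -> z <= lukasiewiczS [seq q i | i <- enum 'I_k].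
Proof.
move=> q01 coh; have q_ge0 i : 0 <= q i by have /andP[] := q01 i.
rewrite lukasiewiczS_ord le_min.
have /andP[_ ->] := coherent_unit_interval coh None; rewrite andbT.
rewrite leNgt; apply/negP => S_lt_z.
have [[c cD gain_ge0] _] := coh setT upper_stakes setT_option_neq0.
have := qd_upper_gain z q_ge0 (qdCH_D cD); lra.
Qed.

Lemma qd_coherentP z : (0 < k)%N -> (forall i, 0 <= q i <= 1) ->
  coherent qdCE qdCH (qdA q z) <->
  hamacherL [seq q i | i <- enum 'I_k] <= z <=
  lukasiewiczS [seq q i | i <- enum 'I_k].
Proof.
move=> k_gt0 q01; split=> [coh|bounds].
  by rewrite qd_coherent_lower ?qd_coherent_upper.
apply: qd_coherent_of_feasible => //.
exact: qd_feasible_mix bounds (qd_feasible_lower k_gt0 q01) (qd_feasible_upper k_gt0 q01).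
Qed.

End QuasiDisjunction.

Section EventsToConstituents.
Variables (T : Type) (n k : nat) (hk : (k <= n)%N) (E H : 'I_n -> pred T).

Definition constituent_of (w : T) : constituent k :=
  ([set i | E (widen_ord hk i) w], [set i | H (widen_ord hk i) w]).

Lemma constituent_of_surj :
  logically_independent E H -> forall c, exists w, constituent_of w = c.
Proof.
move=> li [A B].
have [w hw] := li (fun j => if insub (val j) is Some i then (i \in A, i \in B)
                            else (false, false)).
exists w; congr (_, _); apply/setP => i; rewrite inE;
  by have := hw (widen_ord hk i); rewrite /= valK => -[eE eH]; rewrite ?eE ?eH.
Qed.

Lemma qdE_constituent o w : qdE hk E H o w = qdCE o (constituent_of w).
Proof. by case: o => [i|]; rewrite /= ?inE //; apply: eq_existsb => i; rewrite !inE. Qed.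

Lemma qdH_constituent o w : qdH hk H o w = qdCH o (constituent_of w).
Proof. by case: o => [i|]; rewrite /= ?inE //; apply: eq_existsb => i; rewrite !inE. Qed.

End EventsToConstituents.

Theorem theorem8 (R : realFieldType) (T : Type) (n : nat)
  (E H : 'I_n -> pred T) (p : 'I_n -> R) :
  logically_independent E H ->
  (forall i, 0 <= p i <= 1) ->
  forall (k : nat) (hk : (k <= n)%N), (2 <= k)%N ->
  forall z : R,
    coherent (qdE hk E H) (qdH hk H) (qdp hk p z) <->
    hamacherL [seq p (widen_ord hk i) | i <- enum 'I_k] <= z <=
    lukasiewiczS [seq p (widen_ord hk i) | i <- enum 'I_k].
Proof.
move=> indep p01 k hk k_ge2 z.
have k_gt0 : (0 < k)%N by apply: leq_trans k_ge2.
apply: (iff_trans (coherent_pullback _ (constituent_of_surj hk indep)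
          (qdE_constituent hk E H) (qdH_constituent hk E H))).
exact: qd_coherentP k_gt0 (fun i => p01 (widen_ord hk i)).
Qed.
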